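(* For all integers $i\geq 1$, \[ v_3(a_i-1)=\begin{cases} 0, & i\equiv 0,4,5,7 \pmod 8;\\ v_3(i-1)+1, & i\equiv 1\pmod 8;\\ v_3(i+2)+1, & i\equiv 6 \pmod 8;\\ v_3(i-2)+2, & i\equiv 2\pmod{24};\\ 2, & i\equiv 10\pmod{24};\\ v_3\big((i+6)(i+30)\big)+2, & i\equiv 18\pmod{24};\\ v_3(i-3)+2, & i\equiv 3\pmod{24};\\ v_3(i+13)+2, & i\equiv 11\pmod{24};\\ v_3(i+5)+2, & i\equiv 19\pmod{24}. \end{cases} \]
   Context: The Narayana sequence $(a_n)_{n\geq 0}$ is defined by $a_0=0$, $a_1=a_2=1$ and $a_n=a_{n-1}+a_{n-3}$ for all $n\geq 3$. For an integer $x$, $v_3(x)$ denotes the $3$-adic valuation of $x$ (the exponent of the largest power of $3$ dividing $x$), with the convention $v_3(0)=+\infty$. *)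

From mathcomp Require Import all_boot all_order all_algebra.
Set Implicit Arguments. Unset Strict Implicit. Unset Printing Implicit Defensive.
Import GRing.Theory Num.Theory.

(* narayana_triple n = (a_n, a_(n+1), a_(n+2)) *)
Fixpoint narayana_triple (n : nat) : nat * nat * nat :=
  match n with
  | 0 => (0, 1, 1)
  | k.+1 => let: (x, y, z) := narayana_triple k in (y, z, z + x)
  end.

Definition narayana (n : nat) : nat := (narayana_triple n).1.1.

(* 3-adic valuation of an integer, with v3 0 = +oo encoded as None. *)
Definition v3 (x : int) : option nat :=
  if x == 0 then None else Some (logn 3 `|x|%N).

Definition vadd (v : option nat) (k : nat) : option nat :=
  match v with None => None | Some e => Some (e + k)%N end.

From mathcomp Require Import all_boot all_order all_algebra.
From mathcomp Require Import ring zify.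

Set Implicit Arguments.
Unset Strict Implicit.
Unset Printing Implicit Defensive.

Import GRing.Theory Num.Theory.
Local Open Scope ring_scope.

(* Let M be the matrix of the recurrence acting on states (a_k, a_(k+1), a_(k+2)).
   Over the integers M^8 = 1 + 3 J and M^24 = 1 + 9 J', so the binomial theorem gives
   a_(sn+b) = sum_j C(n, j) 3^(tj) y_j, where y_j is the first coordinate of J^j applied
   to the state at index b (s = 8, t = 1 or s = 24, t = 2).  Hence a_(sn+b) - 1 is
   3-adically dominated by one of its first terms: the constant term a_b - 1 when it is
   prime to 3 (or equals 18), the linear term n 3^t y_1 when a_b = 1, and the quadratic
   term C(n, 2) 3^(2t) y_2 when moreover y_1 = 0.  All later terms are negligible because
   v_3(C(n, j)) >= v_3(n) - v_3(j) and v_3(j) <= j - 2. *)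

Section IterBinomial.
Variable V : zmodType.

Lemma morph_natmul {C : V -> V} : {morph C : x y / x + y} -> forall w k, C (w *+ k) = C w *+ k.
Proof.
move=> C_add w k; have C0 : C 0 = 0 by apply: (addrI (C 0)); rewrite -C_add !addr0.
by elim: k => [|k IH]; rewrite ?mulr0n // !mulrS C_add IH.
Qed.

Lemma iter_addr_binomial {C : V -> V} : {morph C : x y / x + y} ->
  forall n v, iter n (fun w => w + C w) v = \sum_(j < n.+1) iter j C v *+ 'C(n, j).
Proof.
move=> C_add n v; elim: n => [|n IH]; first by rewrite big_ord1.
have C_sum : C (\sum_(j < n.+1) iter j C v *+ 'C(n, j)) =
             \sum_(j < n.+1) iter j.+1 C v *+ 'C(n, j).
  rewrite (big_morph C C_add (morph_natmul C_add 0 0)); apply: eq_bigr => j _.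
  exact: morph_natmul.
rewrite iterS IH C_sum [RHS]big_ord_recl.
under [X in _ = _ + X]eq_bigr do rewrite binS mulrnDr.
rewrite big_split addrA; congr (_ + _).
rewrite big_ord_recl [in RHS]big_ord_recr /= !bin0 bin_small // mulr0n addr0.
by congr (_ + _); apply: eq_bigr.
Qed.

Lemma iter_binomial {T C : V -> V} (s m : nat) : {morph C : x y / x + y} ->
  (forall w, iter s T w = w + C w *+ m) ->
  forall n v, iter (s * n)%N T v = \sum_(j < n.+1) iter j C v *+ ('C(n, j) * m ^ j)%N.
Proof.
move=> C_add hT n v.
have D_add : {morph (fun w => C w *+ m) : x y / x + y}.
  by move=> x y /=; rewrite C_add mulrnDl.
have iter_D j : iter j (fun w => C w *+ m) v = iter j C v *+ m ^ j.
  by elim: j => [|j IH] //=; rewrite IH (morph_natmul C_add) -mulrnA expnSr.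
rewrite mulnC iterM (eq_iter hT) (iter_addr_binomial D_add).
by apply: eq_bigr => j _; rewrite iter_D -mulrnA mulnC.
Qed.

End IterBinomial.

Section BinomialValuation.
Local Open Scope nat_scope.
Variable p : nat.

Lemma dvdn_pexp_shift k a s c N :
  p ^ k %| p ^ a * c -> a + s <= N -> p ^ (k + s) %| c * p ^ N.
Proof.
move=> dv_c le_N.
have -> : c * p ^ N = p ^ a * c * p ^ (N - a).
  by rewrite mulnAC -expnD subnKC 1?mulnC //; lia.
by rewrite expnD; apply: dvdn_mul dv_c (dvdn_exp2l _ _); lia.
Qed.

Hypotheses (p_prime : prime p) (p_gt2 : 2 < p).

Lemma logn_leq_subn2 j : 1 < j -> logn p j <= j - 2.
Proof.
move=> j_gt1; have pow_ge l : l.*2.+1 <= p ^ l.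
  by elim: l => // l IH; rewrite expnS; nia.
have := pow_ge (logn p j); have := dvdn_leq (ltnW j_gt1) (pfactor_dvdnn p j); lia.
Qed.

Lemma dvdn_pfactor_mul k m c : 0 < m -> p ^ k %| m * c -> p ^ k %| p ^ logn p m * c.
Proof.
move=> m_gt0; have [m' cop_m' {1}->] := pfactor_coprime p_prime m_gt0.
by rewrite -mulnA Gauss_dvdr // coprimeXl.
Qed.

Lemma dvdn_bin_lin k n j t e : p ^ k %| n -> 1 < j -> e < t ->
  p ^ (k + t + e).+1 %| 'C(n, j) * (p ^ t) ^ j.
Proof.
move=> dv_n j_gt1 lt_et; rewrite -expnM -addnA -addnS.
apply: (@dvdn_pexp_shift _ (j - 2)); last by nia.
have dv_jC : p ^ k %| j * 'C(n, j).
  by rewrite -(prednK (ltnW j_gt1)) -mul_bin_diag dvdn_mulr.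
apply: dvdn_trans (dvdn_pfactor_mul (ltnW j_gt1) dv_jC) _.
by apply: dvdn_mul (dvdn_exp2l _ (logn_leq_subn2 j_gt1)) (dvdnn _).
Qed.

Lemma dvdn_bin_quad k n j t : p ^ k %| n * n.-1 -> 2 < j -> 1 < t ->
  p ^ (k + 2 * t).+1 %| 'C(n, j) * (p ^ t) ^ j.
Proof.
move=> dv_n j_gt2 t_gt1; rewrite -expnM -addnS.
apply: (@dvdn_pexp_shift _ ((j - 3) + (j - 2))); last by nia.
have dv_jC : p ^ k %| (j.-1 * j) * 'C(n, j).
  case: j j_gt2 => [|[|[|j]]] // _.
  by rewrite -mulnA -mul_bin_diag mulnCA -mul_bin_diag mulnA dvdn_mulr.
have jj_gt0 : 0 < j.-1 * j by rewrite muln_gt0; lia.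
apply: dvdn_trans (dvdn_pfactor_mul jj_gt0 dv_jC) _.
rewrite lognM; [|lia|lia].
apply: dvdn_mul (dvdnn _); apply: dvdn_exp2l; apply: leq_add.
  by have := @logn_leq_subn2 j.-1; lia.
by apply: logn_leq_subn2; lia.
Qed.

Lemma logn_bin2 n : logn p 'C(n, 2) = logn p (n * n.-1).
Proof.
have bin2E : n * n.-1 = 2 * 'C(n, 2) by case: n => // n; rewrite -mul_bin_diag bin1.
by rewrite bin2E logn_Gauss // prime_coprime // dvdn_prime2 //; lia.
Qed.

End BinomialValuation.

Lemma v3_nat m : (0 < m)%N -> v3 m%:Z = Some (logn 3 m).
Proof. by rewrite /v3 absz_nat; case: m. Qed.

Lemma v3_dominant M (w b : int) : ~~ (3 %| w)%Z -> (3 ^+ M.+1 %| b)%Z ->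
  v3 (3 ^+ M * w + b) = Some M.
Proof.
move=> w_coprime dvd_b; set a := _ + b.
have dvd_a : (3 ^+ M %| a)%Z.
  by rewrite rpredD ?dvdz_mulr // (dvdz_trans (dvdz_exp2l _ (leqnSn M))).
have ndvd_a : ~~ (3 ^+ M.+1 %| a)%Z.
  apply: contra w_coprime => dvd_a1.
  rewrite -(@dvdz_mul2l (3 ^+ M)) ?expf_neq0 // -exprSr.
  by rewrite (_ : _ * w = a - b) ?rpredB // /a addrK.
have a_neq0 : a != 0 by apply: contraNneq ndvd_a => ->; rewrite dvdz0.
rewrite /v3 (negbTE a_neq0); congr Some.
move: dvd_a ndvd_a; rewrite !dvdzE !abszX (_ : `|3|%N = 3%N) // !pfactor_dvdn ?absz_gt0 //; lia.
Qed.

Definition binom_sum (r : nat) (y : nat -> int) (n : nat) : int :=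
  \sum_(j < n.+1) y j *+ ('C(n, j) * r ^ j)%N.

Lemma binom_sum_split k r y n : (k <= n.+1)%N ->
  binom_sum r y n = \sum_(j < k) y j *+ ('C(n, j) * r ^ j)%N
                    + \sum_(k <= j < n.+1) y j *+ ('C(n, j) * r ^ j)%N.
Proof.
move=> le_kn; pose F j := y j *+ ('C(n, j) * r ^ j)%N.
by rewrite /binom_sum -!(big_mkord xpredT F) (big_cat_nat (leq0n k) le_kn).
Qed.

Lemma dvdz_natmul (p k N : nat) (x : int) : (p ^ k %| N)%N -> (p%:Z ^+ k %| x *+ N)%Z.
Proof. by move=> dvd_N; rewrite -mulr_natr -[p%:Z]natz -natrX !natz dvdz_mull. Qed.

Lemma dvdz_binom_tail (d : int) k r y n :
  (forall j, (k <= j)%N -> (d %| y j *+ ('C(n, j) * r ^ j)%N)%Z) ->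
  (d %| \sum_(k <= j < n.+1) y j *+ ('C(n, j) * r ^ j)%N)%Z.
Proof. by move=> dvd_y; rewrite big_nat_cond rpred_sum // => j /andP[/andP[/dvd_y]]. Qed.

Lemma v3_binom_sum_head r m y n c w :
  y 0%N - c = 3 ^+ m * w -> ~~ (3 %| w)%Z ->
  (forall j, (0 < j)%N -> (3 ^+ m.+1 %| y j *+ ('C(n, j) * r ^ j)%N)%Z) ->
  v3 (binom_sum r y n - c) = Some m.
Proof.
move=> y0 w_coprime dvd_tail.
rewrite (@binom_sum_split 1) // big_ord1 bin0 expn0 mulr1n addrAC y0.
exact: v3_dominant w_coprime (dvdz_binom_tail dvd_tail).
Qed.

Lemma not_dvdz3_mul (m : nat) (u : int) :
  coprime 3 m -> ~~ (3 %| u)%Z -> ~~ (3 %| m%:Z * u)%Z.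
Proof.
rewrite prime_coprime // => m_coprime u_coprime.
by rewrite dvdzE abszM absz_nat Euclid_dvdM // negb_or m_coprime.
Qed.

Lemma v3_binom_sum_lin t e y u n : (e < t)%N -> (0 < n)%N ->
  y 0%N = 1 -> y 1%N = 3 ^+ e * u -> ~~ (3 %| u)%Z ->
  v3 (binom_sum (3 ^ t) y n - 1) = Some (logn 3 n + t + e)%N.
Proof.
move=> lt_et n_gt0 y0 y1 u_coprime.
have [n' n'_coprime n_eq] := pfactor_coprime (isT : prime 3) n_gt0.
set k := logn 3 n in n_eq *.
rewrite (@binom_sum_split 2) 1?ltnS // big_ord_recr big_ord1 /= y0 y1 bin0 bin1.
set tail := \sum_(_ <= _ < _) _.
rewrite (_ : _ + _ + tail - 1 = 3 ^+ (k + t + e) * (n'%:Z * u) + tail); last first.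
  rewrite n_eq expn0 expn1 muln1 -(mulr_natr (3 ^+ e * u)) !natrM !natrX -natz !exprD; ring.
apply: v3_dominant; first exact: not_dvdz3_mul.
apply: dvdz_binom_tail => j j_gt1; apply: (@dvdz_natmul 3).
by rewrite dvdn_bin_lin // n_eq dvdn_mull.
Qed.

Lemma v3_binom_sum_quad t y n : (1 < t)%N -> (1 < n)%N ->
  y 0%N = 1 -> y 1%N = 0 -> ~~ (3 %| y 2%N)%Z ->
  v3 (binom_sum (3 ^ t) y n - 1) = Some (logn 3 (n * n.-1) + 2 * t)%N.
Proof.
move=> t_gt1 n_gt1 y0 y1 y2_coprime.
have C_gt0 : (0 < 'C(n, 2))%N by rewrite bin_gt0.
have [c c_coprime C_eq] := pfactor_coprime (isT : prime 3) C_gt0.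
rewrite logn_bin2 // in C_eq; set k := logn 3 (n * n.-1) in C_eq *.
rewrite (@binom_sum_split 3) 1?ltnS // 2!big_ord_recr big_ord1 /= y0 y1 bin0.
set tail := \sum_(_ <= _ < _) _.
rewrite (_ : _ + _ + _ + tail - 1 = 3 ^+ (k + 2 * t) * (c%:Z * y 2%N) + tail); last first.
  rewrite C_eq expn0 muln1 mul0rn -(mulr_natr (y 2%N)) !natrM !natrX -natz !exprD.
  ring.
apply: v3_dominant; first exact: not_dvdz3_mul.
apply: dvdz_binom_tail => j j_gt2; apply: (@dvdz_natmul 3).
by rewrite dvdn_bin_quad // pfactor_dvdnn.
Qed.

Definition narayana_step (w : int * int * int) : int * int * int :=
  (w.1.2, w.2, w.2 + w.1.1).

Lemma narayana_iter k : (narayana k)%:Z = (iter k narayana_step (0, 1, 1)).1.1.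
Proof.
suff -> : iter k narayana_step (0, 1, 1) =
  (Posz (narayana_triple k).1.1, Posz (narayana_triple k).1.2, Posz (narayana_triple k).2) by [].
elim: k => [|k /= ->] //.
by case: (narayana_triple k) => [[x y] z]; rewrite /narayana_step /= PoszD.
Qed.

Lemma triple_add (x y z x' y' z' : int) :
  ((x, y, z) : int * int * int) + (x', y', z') = (x + x', y + y', z + z').
Proof. by []. Qed.

Lemma triple_natmul (x y z : int) k :
  ((x, y, z) : int * int * int) *+ k = (x *+ k, y *+ k, z *+ k).
Proof. by elim: k => // k IH; rewrite !mulrS IH. Qed.

(* (M^8 - 1) / 3 and (M^24 - 1) / 9, for M the matrix of narayana_step. *)
Definition narayana_jump8 (w : int * int * int) : int * int * int :=
  let: (x, y, z) := w in (x + y + 2 * z, 2 * x + y + 3 * z, 3 * x + 2 * y + 4 * z).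

Definition narayana_jump24 (w : int * int * int) : int * int * int :=
  let: (x, y, z) := w in
  (208 * x + 142 * y + 305 * z, 305 * x + 208 * y + 447 * z, 447 * x + 305 * y + 655 * z).

Lemma narayana_jump8_add : {morph narayana_jump8 : u w / u + w}.
Proof. by move=> [[? ?] ?] [[? ?] ?]; rewrite /= !triple_add /=; congr (_, _, _); ring. Qed.

Lemma narayana_jump24_add : {morph narayana_jump24 : u w / u + w}.
Proof. by move=> [[? ?] ?] [[? ?] ?]; rewrite /= !triple_add /=; congr (_, _, _); ring. Qed.

Lemma iter8_narayana_step w : iter 8 narayana_step w = w + narayana_jump8 w *+ 3.
Proof.
by case: w => [[x y] z]; rewrite triple_natmul triple_add /narayana_step /=; congr (_, _, _); ring.
Qed.

Lemma iter24_narayana_step w : iter 24 narayana_step w = w + narayana_jump24 w *+ 9.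
Proof.
by case: w => [[x y] z]; rewrite triple_natmul triple_add /narayana_step /=; congr (_, _, _); ring.
Qed.

Lemma narayana_binom_sum s r C : {morph C : u w / u + w} ->
  (forall w, iter s narayana_step w = w + C w *+ r) ->
  forall i n v, iter i narayana_step (0, 1, 1) = iter (s * n)%N narayana_step v ->
  (narayana i)%:Z = binom_sum r (fun j => (iter j C v).1.1) n.
Proof.
move=> C_add hC i n v hv; rewrite narayana_iter hv (iter_binomial C_add hC) !raddf_sum.
by apply: eq_bigr => j _; rewrite !raddfMn.
Qed.

Lemma narayana_8n i n v :
  iter i narayana_step (0, 1, 1) = iter (8 * n)%N narayana_step v ->
  (narayana i)%:Z = binom_sum (3 ^ 1) (fun j => (iter j narayana_jump8 v).1.1) n.
Proof. exact: narayana_binom_sum narayana_jump8_add iter8_narayana_step i n v. Qed.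

Lemma narayana_24n i n v :
  iter i narayana_step (0, 1, 1) = iter (24 * n)%N narayana_step v ->
  (narayana i)%:Z = binom_sum (3 ^ 2) (fun j => (iter j narayana_jump24 v).1.1) n.
Proof. exact: narayana_binom_sum narayana_jump24_add iter24_narayana_step i n v. Qed.

Lemma v3_narayana_mod8_0457 i :
  ((i %% 8 == 0) || (i %% 8 == 4) || (i %% 8 == 5) || (i %% 8 == 7))%N ->
  v3 ((narayana i)%:Z - 1) = Some 0%N.
Proof.
have v3_8n_add b : ~~ (3 %| (iter b narayana_step (0, 1, 1)).1.1 - 1)%Z ->
    v3 ((narayana (8 * (i %/ 8) + b)%N)%:Z - 1) = Some 0%N.
  move=> b_coprime; rewrite (narayana_8n (iterD _ _ _ _)).
  apply: v3_binom_sum_head b_coprime _; first by rewrite mul1r.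
  move=> j j_gt0; apply: (@dvdz_natmul 3).
  by rewrite dvdn_mull // dvdn_exp.
move=> i_mod8; rewrite (divn_eq i 8) [(_ * 8)%N]mulnC.
by case/orP: i_mod8 => [/orP[/orP[]|]|] /eqP ->; apply: v3_8n_add.
Qed.

(* Run backwards, the recurrence extends a to negative indices; v is then the state
   (a_(-R), a_(-R+1), a_(-R+2)). *)
Lemma iter_narayana_back R v i m : iter R narayana_step v = (0, 1, 1) -> (i + R = m)%N ->
  iter i narayana_step (0, 1, 1) = iter m narayana_step v.
Proof. by move=> hv <-; rewrite iterD hv. Qed.

Lemma logn3_8n n : logn 3 (8 * n)%N = logn 3 n.
Proof. exact: logn_Gauss. Qed.

Lemma logn3_24n n : (0 < n)%N -> logn 3 (24 * n)%N = (logn 3 n).+1.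
Proof.
move=> n_gt0; rewrite (_ : 24 * n = 3 * (8 * n))%N; last by lia.
by rewrite lognM ?muln_gt0 // logn3_8n logn_prime.
Qed.

Lemma v3_narayana_mod8_1 i : (i %% 8 == 1)%N ->
  v3 ((narayana i)%:Z - 1) = vadd (v3 (i%:Z - 1)) 1.
Proof.
move=> /eqP i_mod8.
have i_eq : i = (8 * (i %/ 8) + 1)%N by rewrite {1}(divn_eq i 8) i_mod8 mulnC.
have [n0|n_gt0] := posnP (i %/ 8); first by rewrite i_eq n0.
rewrite i_eq PoszD addrK v3_nat ?muln_gt0 // logn3_8n.
by rewrite (narayana_8n (iterD _ _ _ _)) (v3_binom_sum_lin (e := 0) (u := 4)) ?addn0.
Qed.

Lemma v3_narayana_mod8_6 i : (i %% 8 == 6)%N ->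
  v3 ((narayana i)%:Z - 1) = vadd (v3 (i%:Z + 2)) 1.
Proof.
move=> /eqP i_mod8; set n := (i %/ 8).+1.
have i_eq : (i + 2 = 8 * n)%N by rewrite {1}(divn_eq i 8) i_mod8 /n; lia.
rewrite (_ : i%:Z + 2 = (8 * n)%N%:Z) ?v3_nat ?muln_gt0 // ?logn3_8n; last by rewrite -i_eq.
rewrite (narayana_8n (iter_narayana_back (R := 2) (v := (1, 0, 0)) erefl i_eq)).
by rewrite (v3_binom_sum_lin (e := 0) (u := 1)) ?addn0.
Qed.

Lemma v3_narayana_mod24_2 i : (i %% 24 == 2)%N ->
  v3 ((narayana i)%:Z - 1) = vadd (v3 (i%:Z - 2)) 2.
Proof.
move=> /eqP i_mod24.
have i_eq : i = (24 * (i %/ 24) + 2)%N by rewrite {1}(divn_eq i 24) i_mod24 mulnC.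
have [n0|n_gt0] := posnP (i %/ 24); first by rewrite i_eq n0.
rewrite i_eq PoszD addrK v3_nat ?muln_gt0 // logn3_24n //.
rewrite (narayana_24n (iterD _ _ _ _)) (v3_binom_sum_lin (e := 1) (u := 320)) //=.
by rewrite addnAC addn1.
Qed.

Lemma v3_narayana_mod24_3 i : (i %% 24 == 3)%N ->
  v3 ((narayana i)%:Z - 1) = vadd (v3 (i%:Z - 3)) 2.
Proof.
move=> /eqP i_mod24.
have i_eq : i = (24 * (i %/ 24) + 3)%N by rewrite {1}(divn_eq i 24) i_mod24 mulnC.
have [n0|n_gt0] := posnP (i %/ 24); first by rewrite i_eq n0.
rewrite i_eq PoszD addrK v3_nat ?muln_gt0 // logn3_24n //.
rewrite (narayana_24n (iterD _ _ _ _)) (v3_binom_sum_lin (e := 1) (u := 469)) //=.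
by rewrite addnAC addn1.
Qed.

Lemma v3_narayana_mod24_10 i : (i %% 24 == 10)%N -> v3 ((narayana i)%:Z - 1) = Some 2%N.
Proof.
move=> /eqP i_mod24; rewrite (divn_eq i 24) i_mod24 mulnC (narayana_24n (iterD _ _ _ _)).
apply: (v3_binom_sum_head (w := 2)) => // - [|[|j]] // _.
  by rewrite mulnC mulrnA rpredMn.
apply: (@dvdz_natmul 3); rewrite dvdn_mull // -expnM dvdn_exp2l //; lia.
Qed.

Lemma v3_narayana_mod24_11 i : (i %% 24 == 11)%N ->
  v3 ((narayana i)%:Z - 1) = vadd (v3 (i%:Z + 13)) 2.
Proof.
move=> /eqP i_mod24; set n := (i %/ 24).+1.
have i_eq : (i + 13 = 24 * n)%N by rewrite {1}(divn_eq i 24) i_mod24 /n; lia.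
rewrite (_ : i%:Z + 13 = (24 * n)%N%:Z) ?v3_nat ?muln_gt0 // ?logn3_24n //; last by rewrite -i_eq.
rewrite (narayana_24n (iter_narayana_back (R := 13) (v := (1, 5, -3)) erefl i_eq)).
by rewrite (v3_binom_sum_lin (e := 1) (u := 1)) //= addnAC addn1.
Qed.

Lemma v3_narayana_mod24_19 i : (i %% 24 == 19)%N ->
  v3 ((narayana i)%:Z - 1) = vadd (v3 (i%:Z + 5)) 2.
Proof.
move=> /eqP i_mod24; set n := (i %/ 24).+1.
have i_eq : (i + 5 = 24 * n)%N by rewrite {1}(divn_eq i 24) i_mod24 /n; lia.
rewrite (_ : i%:Z + 5 = (24 * n)%N%:Z) ?v3_nat ?muln_gt0 // ?logn3_24n //; last by rewrite -i_eq.
rewrite (narayana_24n (iter_narayana_back (R := 5) (v := (1, -1, 0)) erefl i_eq)).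
by rewrite (v3_binom_sum_lin (e := 1) (u := 22)) //= addnAC addn1.
Qed.

Lemma v3_narayana_mod24_18 i : (i %% 24 == 18)%N ->
  v3 ((narayana i)%:Z - 1) = vadd (v3 ((i%:Z + 6) * (i%:Z + 30))) 2.
Proof.
move=> /eqP i_mod24; set n := (i %/ 24).+2.
have i_eq : (i + 30 = 24 * n)%N by rewrite {1}(divn_eq i 24) i_mod24 /n; lia.
have -> : (i%:Z + 6) * (i%:Z + 30) = (24 * n.-1 * (24 * n))%N%:Z.
  by rewrite PoszM; congr (_ * _); rewrite /n; lia.
rewrite v3_nat ?muln_gt0 // (lognM 3 (_ : 0 < 24 * n.-1)%N) ?muln_gt0 // !logn3_24n //.
rewrite (narayana_24n (iter_narayana_back (R := 30) (v := (1, 136, -64)) erefl i_eq)).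
by rewrite (v3_binom_sum_quad (t := 2)) // lognM //=; congr Some; lia.
Qed.

Theorem theorem3p5 (i : nat) : (1 <= i)%N ->
  let a := ((narayana i)%:Z - 1)%R in
  let z := (i%:Z)%R in
  (((i %% 8 == 0) || (i %% 8 == 4) || (i %% 8 == 5) || (i %% 8 == 7))%N ->
      v3 a = Some 0%N) /\
  ((i %% 8 == 1)%N -> v3 a = vadd (v3 (z - 1)) 1) /\
  ((i %% 8 == 6)%N -> v3 a = vadd (v3 (z + 2)) 1) /\
  ((i %% 24 == 2)%N -> v3 a = vadd (v3 (z - 2)) 2) /\
  ((i %% 24 == 10)%N -> v3 a = Some 2%N) /\
  ((i %% 24 == 18)%N -> v3 a = vadd (v3 ((z + 6) * (z + 30))) 2) /\
  ((i %% 24 == 3)%N -> v3 a = vadd (v3 (z - 3)) 2) /\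
  ((i %% 24 == 11)%N -> v3 a = vadd (v3 (z + 13)) 2) /\
  ((i %% 24 == 19)%N -> v3 a = vadd (v3 (z + 5)) 2).
Proof.
move=> _ a z.
split; first exact: v3_narayana_mod8_0457.
split; first exact: v3_narayana_mod8_1.
split; first exact: v3_narayana_mod8_6.
split; first exact: v3_narayana_mod24_2.
split; first exact: v3_narayana_mod24_10.
split; first exact: v3_narayana_mod24_18.
split; first exact: v3_narayana_mod24_3.
split; first exact: v3_narayana_mod24_11.
exact: v3_narayana_mod24_19.
Qed.
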